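(* Let $x$ be a grid function with $x_s\neq0$ at every node that satisfies the scheme (S) with $\check B=\frac{2(\cosh\tau-1)}{\tau^2}\,x$ (discretization for the parabolic bottom $b(x)=x^2/2$). Then at every node $$\Big(x\,\frac{e^{\hat t}-e^{t}}{\tau}-e^{t}x_t\Big)_{\check t}-\Big(e^{t}\big((\hat x_s\check x_s)^{-1}-\alpha^2x_s\big)\Big)_{\bar s}=0,$$ where $t$ is the time coordinate of the node and $\hat t=t+\tau$.
   Context: Fix mesh steps $\tau>0$, $h>0$ and a constant $\alpha\in\mathbb R$. A grid function is a real-valued function $f=f(t,s)$ on the uniform orthogonal mesh $\{(n\tau,kh): n,k\in\mathbb Z\}$; at the node $(n\tau,kh)$ the symbol $t$ denotes the number $n\tau$. Shifts: $\hat f=f(t+\tau,s)$, $\check f=f(t-\tau,s)$, $f_+=f(t,s+h)$, $f_-=f(t,s-h)$; a shift applied to a composite expression shifts the whole expression, including explicit occurrences of $t$ (e.g. $\hat x_s$ is $x_s$ evaluated at $(t+\tau,s)$). Differences: $f_t=(\hat f-f)/\tau$, $f_{\check t}=(f-\check f)/\tau$, $f_s=(f_+-f)/h$, $f_{\bar s}=(f-f_-)/h$; iterated differences compose, e.g. $x_{t\check t}=(x_t)_{\check t}=(\hat x-2x+\check x)/\tau^2$ and $x_{s\bar s}=(x_s)_{\bar s}=(x_+-2x+x_-)/h^2$. Given a grid function $x$ with $x_s\neq0$ everywhere and a grid function $\check B$ (an approximation of the bottom-slope term), the scheme (S) is the requirement that at every node $$x_{t\check t}-\alpha^2x_{s\bar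 s}+\Big(\frac{1}{\hat x_s\check x_s}\Big)_{\bar s}-\check B=0 .$$ *)

From Stdlib Require Import Reals ZArith.
Open Scope R_scope.

(* A grid function: value at node (n*tau, k*h) is f n k. *)
Definition grid := Z -> Z -> R.

Definition tnode (tau : R) (n : Z) : R := IZR n * tau.

Definition dt (tau : R) (f : grid) : grid :=
  fun n k => (f (n + 1)%Z k - f n k) / tau.
Definition dtb (tau : R) (f : grid) : grid :=
  fun n k => (f n k - f (n - 1)%Z k) / tau.
Definition ds (h : R) (f : grid) : grid :=
  fun n k => (f n (k + 1)%Z - f n k) / h.
Definition dsb (h : R) (f : grid) : grid :=
  fun n k => (f n k - f n (k - 1)%Z) / h.

Definition hat (f : grid) : grid := fun n k => f (n + 1)%Z k.
Definition chk (f : grid) : grid := fun n k => f (n - 1)%Z k.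

Definition scheme (tau h alpha : R) (x Bc : grid) : Prop :=
  forall n k : Z,
    dtb tau (dt tau x) n k - alpha ^ 2 * dsb h (ds h x) n k
    + dsb h (fun n' k' => / (hat (ds h x) n' k' * chk (ds h x) n' k')) n k
    - Bc n k = 0.

Definition Bpar (tau : R) (x : grid) : grid :=
  fun n k => 2 * (cosh tau - 1) / tau ^ 2 * x n k.

From Stdlib Require Import Reals ZArith Lra.
Open Scope R_scope.

(* The conservation law is the scheme (S) multiplied by the weight e^t and
   rewritten in divergence form.  Two exact difference identities do this:

   - time part (a discrete integrating factor): for any weight E with
     E(t+tau) = q E(t), q <> 0,
       (x (E^ - E)/tau - E x_t)_tb = - E (x_ttb - (q + 1/q - 2)/tau^2 x);
     for E = e^t we have q = e^tau and q + 1/q - 2 = 2 (cosh tau - 1), so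
     the bracket is x_ttb - Bpar;
   - space part: a factor depending on t only commutes with the backward
     difference in s, so (e^t g)_sb = e^t g_sb.

   Adding the two identities, the left-hand side of the theorem equals
   -e^t times the left-hand side of (S), hence vanishes.  The argument is
   purely algebraic: besides (S) it only uses tau <> 0. *)

Lemma dsb_time_factor (h : R) (c : Z -> R) (g : grid) (n k : Z) :
  dsb h (fun n' k' => c n' * g n' k') n k = c n * dsb h g n k.
Proof. unfold dsb, Rdiv; ring. Qed.

Lemma dsb_lincomb (h a : R) (f g : grid) (n k : Z) :
  dsb h (fun n' k' => f n' k' - a * g n' k') n k = dsb h f n k - a * dsb h g n k.
Proof. unfold dsb, Rdiv; ring. Qed.

Lemma integrating_factor_identity (tau q : R) (E : Z -> R) (x : grid) (n k : Z) :
  tau <> 0 -> q <> 0 ->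
  (forall m : Z, E (m + 1)%Z = q * E m) ->
  dtb tau (fun n' k' => x n' k' * (E (n' + 1)%Z - E n') / tau - E n' * dt tau x n' k') n k
  = - E n * (dtb tau (dt tau x) n k - (q + / q - 2) / tau ^ 2 * x n k).
Proof.
  intros Htau Hq Hgeom.
  assert (Hnext : E (n + 1)%Z = q * E n) by apply Hgeom.
  assert (Hprev : E (n - 1)%Z = E n / q).
  { rewrite <- (Z.sub_add 1 n) at 2. rewrite Hgeom. field; exact Hq. }
  unfold dtb, dt.
  replace (n - 1 + 1)%Z with n by ring.
  rewrite Hnext, Hprev.
  field; split; assumption.
Qed.

Lemma exp_tnode_succ (tau : R) (m : Z) :
  exp (tnode tau (m + 1)%Z) = exp tau * exp (tnode tau m).
Proof.
  rewrite <- exp_plus. f_equal. unfold tnode. rewrite plus_IZR. ring.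
Qed.

Lemma exp_ratio_coefficient (tau : R) :
  exp tau + / exp tau - 2 = 2 * (cosh tau - 1).
Proof. unfold cosh. rewrite exp_Ropp. field. apply Rgt_not_eq, exp_pos. Qed.

Lemma time_part (tau : R) (x : grid) (n k : Z) :
  tau <> 0 ->
  dtb tau (fun n' k' =>
      x n' k' * (exp (tnode tau (n' + 1)%Z) - exp (tnode tau n')) / tau
      - exp (tnode tau n') * dt tau x n' k') n k
  = - exp (tnode tau n) * (dtb tau (dt tau x) n k - Bpar tau x n k).
Proof.
  intros Htau.
  rewrite (integrating_factor_identity tau (exp tau) (fun m => exp (tnode tau m)))
    by (auto using exp_tnode_succ; apply Rgt_not_eq, exp_pos).
  unfold Bpar. rewrite exp_ratio_coefficient. unfold Rdiv. ring.
Qed.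

Theorem mainTheorem5 (tau h alpha : R) (x : grid) :
  0 < tau -> 0 < h ->
  (forall n k : Z, ds h x n k <> 0) ->
  scheme tau h alpha x (Bpar tau x) ->
  forall n k : Z,
    dtb tau (fun n' k' =>
        x n' k' * (exp (tnode tau (n' + 1)%Z) - exp (tnode tau n')) / tau
        - exp (tnode tau n') * dt tau x n' k') n k
    - dsb h (fun n' k' =>
        exp (tnode tau n') *
          (/ (hat (ds h x) n' k' * chk (ds h x) n' k') - alpha ^ 2 * ds h x n' k')) n k
    = 0.
Proof.
  intros Htau _ _ Hscheme n k.
  rewrite time_part by lra.
  rewrite (dsb_time_factor h (fun m => exp (tnode tau m))).
  rewrite (dsb_lincomb h (alpha ^ 2)
    (fun n' k' => / (hat (ds h x) n' k' * chk (ds h x) n' k')) (ds h x)).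
  (* What remains is -e^t times the left-hand side of (S) at (n, k). *)
  rewrite <- (Rmult_0_r (- exp (tnode tau n))), <- (Hscheme n k).
  ring.
Qed.
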